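(* Let $f : X \to \mathbb{R}$ and suppose there is a closed set $C \subseteq X$ such that $\inf_{x \in C} \mathrm{osc}_f(C,x) > 0$. Then Player I has a winning strategy in $\Gamma'(f)$.
   Context: Let $A$ be a non-empty countable set and $T$ a pruned tree on $A$ (a set of finite sequences of elements of $A$, closed under initial segments, in which every sequence has a proper extension in $T$). Let $X$ be the set of infinite branches of $T$, with the topology generated by the cylinder sets $O(s) = \{x \in X : s \text{ is an initial segment of } x\}$, $s \in T$. For closed $C \subseteq X$ and $x \in C$, $\mathrm{osc}_f(C,x) = \inf_{s \in T,\, x \in O(s)} \sup_{y,z \in O(s) \cap C} |f(y) - f(z)|$. The game $\Gamma'(f)$: Player I and Player II alternate, Player I moving first; Player I plays $x_0, x_1, \dots \in A$ subject to $(x_0,\dots,x_t) \in T$ for all $t$, and after each move $x_t$ Player II plays a pair of reals $(v_t,w_t)$; Player II wins iff $f(x_0,x_1,\dots) = \limsup_t v_t = \liminf_t w_t$; otherwise Player I wins. *)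

From HB Require Import structures.
From mathcomp Require Import all_boot all_order all_algebra.
From mathcomp Require Import all_classical all_reals all_analysis.
Unset Printing Implicit Defensive.
Import Order.TTheory GRing.Theory Num.Theory.
Local Open Scope classical_set_scope.
Local Open Scope ring_scope.

Section Trees.
Variable A : countType.

Definition is_tree (T : set (seq A)) : Prop :=
  forall s t : seq A, T (s ++ t) -> T s.

Definition is_pruned (T : set (seq A)) : Prop :=
  forall s, T s -> exists t : seq A, t <> [::] /\ T (s ++ t).

Definition branch (T : set (seq A)) (x : nat -> A) : Prop :=
  forall n, T (mkseq x n).

Definition Branches (T : set (seq A)) := {x : nat -> A | branch T x}.

Definition cyl (T : set (seq A)) (s : seq A) : set (Branches T) :=
  fun x => mkseq (proj1_sig x) (size s) = s.

(* Open sets of the topology generated by the cylinders O(s), s \in T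
   (which form a basis): unions of cylinders. *)
Definition cyl_open (T : set (seq A)) (U : set (Branches T)) : Prop :=
  forall x, U x -> exists s, T s /\ cyl T s x /\ cyl T s `<=` U.

Definition cyl_closed (T : set (seq A)) (C : set (Branches T)) : Prop :=
  cyl_open T (~` C).

Definition osc {R : realType} (T : set (seq A)) (f : Branches T -> R)
  (C : set (Branches T)) (x : Branches T) : \bar R :=
  ereal_inf [set ereal_sup [set (`|f yz.1 - f yz.2|)%:E |
                               yz in [set yz : Branches T * Branches T |
                                        (cyl T s `&` C) yz.1 /\
                                        (cyl T s `&` C) yz.2]]
            | s in [set s | T s /\ cyl T s x]].

(* The play of Player I's moves produced by a strategy sigma (a function of
   Player II's previous moves) against Player II's moves (v t, w t). *)
Definition play_I {R : realType} (sigma : seq (R * R) -> A) (v w : nat -> R)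
  : nat -> A :=
  fun t => sigma [seq (v i, w i) | i <- iota 0 t].

Definition I_wins_Gamma' {R : realType} (T : set (seq A))
  (f : Branches T -> R) : Prop :=
  exists sigma : seq (R * R) -> A,
    forall v w : nat -> R,
      (forall t, T (mkseq (play_I sigma v w) t.+1)) /\
      forall x : Branches T, proj1_sig x = play_I sigma v w ->
        ~ ((f x)%:E = limn_esup (fun t => (v t)%:E) /\
           (f x)%:E = limn_einf (fun t => (w t)%:E)).
End Trees.
Arguments is_tree {A}.
Arguments is_pruned {A}.
Arguments branch {A}.
Arguments Branches {A}.
Arguments cyl {A}.
Arguments cyl_open {A}.
Arguments cyl_closed {A}.
Arguments osc {A R}.
Arguments play_I {A R}.
Arguments I_wins_Gamma' {A R}.

From HB Require Import structures.
From mathcomp Require Import all_boot all_order all_algebra.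
From mathcomp Require Import all_classical all_reals all_analysis.
From mathcomp Require Import lra.
Import Order.TTheory GRing.Theory Num.Theory.
Local Open Scope classical_set_scope.
Local Open Scope ring_scope.

(* Fix e > 0 below every osc_f(C,x), x in C, and c > 0 with 8c < e.  Since
   the oscillation of f at a branch y exceeds 8c inside every cylinder at y,
   every branch y of C can be "jumped" to a branch z of C that agrees with y
   on any prescribed finite prefix while |f z - f y| > 4c.
   Player I keeps a target branch of C and plays its coordinates.  Once both
   v and w have come within c of f(target) since the last switch, he jumps to
   a new target agreeing with the old one on the moves already played.
   - If Player I switches only finitely often, the play is the final target
     x, and limsup v = f x = liminf w would force v and w to come within c
     of f x again, triggering one more switch: impossible.
   - If he switches infinitely often, limsup v = L = liminf w makes every
     target met at a late switch lie within 2c of L; two consecutive late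
     targets are then within 4c of each other, contradicting the jump size. *)

Lemma limn_esup_eventually_lt {R : realType} {u : nat -> R} {L c : R} :
  0 < c -> limn_esup (fun t => (u t)%:E) = L%:E ->
  exists N, forall t, (N <= t)%N -> u t < L + c.
Proof.
move=> c0; rewrite /limn_esup /limf_esup => uL.
have : (ereal_inf [set ereal_sup [set (u t)%:E | t in V] | V in \oo]
          < (L + c)%:E)%E by rewrite uL lte_fin ltrDl.
move=> /ereal_inf_lt [_ [V [N _ NV] <-]] supV.
exists N => t Nt; rewrite -lte_fin; apply: le_lt_trans supV.
by apply: ereal_sup_ubound; exists t => //; exact: NV.
Qed.

Lemma limn_esup_frequently_near {R : realType} {u : nat -> R} {L c : R} :
  0 < c -> limn_esup (fun t => (u t)%:E) = L%:E ->
  forall N, exists2 t, (N <= t)%N & `|u t - L| < c.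
Proof.
move=> c0 uL N; have [N' uN'] := limn_esup_eventually_lt c0 uL.
apply: contrapT => far.
have tail_le : (ereal_sup [set (u t)%:E | t in [set t | (maxn N N' <= t)%N]]
                 <= (L - c)%:E)%E.
  apply: ge_ereal_sup => _ [t /= Nt <-]; rewrite lee_fin leNgt.
  apply/negP => ut; apply: far; exists t; first exact: leq_trans (leq_maxl _ _) Nt.
  have := uN' t (leq_trans (leq_maxr _ _) Nt).
  by rewrite ltr_norml; move=> ?; apply/andP; split; lra.
have : (L%:E <= ereal_sup [set (u t)%:E | t in [set t | (maxn N N' <= t)%N]])%E.
  rewrite -uL; apply: ereal_inf_lbound.
  by exists [set t | (maxn N N' <= t)%N] => //; exists (maxn N N').
by move=> /le_trans /(_ tail_le); rewrite lee_fin; lra.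
Qed.

Lemma ereal_inf_gt0_bound {R : realType} {S : set (\bar R)} :
  (0 < ereal_inf S)%E -> exists2 e : R, 0 < e & forall x, S x -> (e%:E <= x)%E.
Proof.
case E : (ereal_inf S) => [r| |] // r0.
  by exists r => // x Sx; rewrite -E; exact: ereal_inf_lbound.
exists 1 => // x Sx; have : (+oo <= x)%E by rewrite -E; exact: ereal_inf_lbound.
by rewrite leye_eq => /eqP ->; rewrite leey.
Qed.

Section Oscillation.
Variables (R : realType) (A : countType) (T : set (seq A)).
Variables (f : Branches T -> R) (C : set (Branches T)).

Definition agree_upto (n : nat) (z y : Branches T) : Prop :=
  forall i, (i < n)%N -> sval z i = sval y i.

Lemma branch_eq (x y : Branches T) : sval x = sval y -> x = y.
Proof. by case: x y => [x hx] [y hy] /= xy; exact: eq_exist. Qed.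

(* If the oscillation at [y] exceeds [2 d], the cylinder of every prefix of
   [y] contains a branch of [C] on which [f] differs from [f y] by more than
   [d]: of two points of the cylinder whose values differ by more than
   [2 d], one is [d]-far from [f y]. *)
Lemma far_branch (d : R) (y : Branches T) (n : nat) :
  ((2 * d)%:E < osc T f C y)%E ->
  exists z, [/\ C z, agree_upto n z y & d < `|f z - f y|].
Proof.
move=> dy; pose s := mkseq (sval y) n.
have ys : cyl T s y by rewrite /cyl /s size_mkseq.
have in_cyl z : cyl T s z -> agree_upto n z y.
  move=> zs i ilt; have := congr1 (fun l => nth (sval y 0) l i) zs.
  by rewrite /s size_mkseq !nth_mkseq.
have : ((2 * d)%:E < ereal_sup [set (`|f yz.1 - f yz.2|)%:E |
          yz in [set yz : Branches T * Branches T |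
                   (cyl T s `&` C) yz.1 /\ (cyl T s `&` C) yz.2]])%E.
  apply: lt_le_trans dy _; apply: ereal_inf_lbound; exists s => //.
  by split => //; exact: (svalP y n).
move=> /ereal_sup_gt [_ [[a b] /= [[sa Ca] [sb Cb]] <-]]; rewrite lte_fin => ab.
have [ay|ay] := ltP d `|f a - f y|; first by exists a; split => //; exact: in_cyl.
exists b; split => //; first exact: in_cyl.
have : `|f a - f b| <= `|f a - f y| + `|f y - f b|.
  by rewrite -[f a - f b](subrKA (f y)) ler_normD.
by move=> tri; rewrite distrC; lra.
Qed.

Lemma far_jump_exists (d : R) :
  (forall y, C y -> ((2 * d)%:E < osc T f C y)%E) ->
  exists jump : Branches T -> nat -> Branches T, forall y n, C y ->
    [/\ C (jump y n), agree_upto n (jump y n) y & d < `|f (jump y n) - f y|].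
Proof.
move=> oscC.
have jump_at y n : exists z, C y -> [/\ C z, agree_upto n z y & d < `|f z - f y|].
  have [Cy|nCy] := pselect (C y); last by exists y => /nCy.
  by have [z ?] := far_branch _ _ n (oscC y Cy); exists z.
have [jump Hjump] := choice (fun yn => jump_at yn.1 yn.2).
by exists (fun y n => jump (y, n)) => y n; exact: Hjump (y, n).
Qed.

End Oscillation.
Arguments agree_upto {A T}.
Arguments branch_eq {A T}.
Arguments far_jump_exists {R A T f C d}.

Section SwitchingStrategy.
Variables (R : realType) (A : countType) (T : set (seq A)).
Variables (f : Branches T -> R) (C : set (Branches T)) (c : R).
Variable jump : Branches T -> nat -> Branches T.
Hypothesis jump_spec : forall y n, C y ->
  [/\ C (jump y n), agree_upto n (jump y n) y & 4 * c < `|f (jump y n) - f y|].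
Variable y0 : Branches T.
Hypothesis C_y0 : C y0.

Record pstate := PState { target : Branches T; last_switch : nat }.

Definition near (a : R) (y : Branches T) : bool := `|a - f y| < c.

Definition switch (v w : nat -> R) (s : pstate) (t : nat) : bool :=
  has (fun i => near (v i) (target s)) (index_iota (last_switch s) t.+1) &&
  has (fun i => near (w i) (target s)) (index_iota (last_switch s) t.+1).

Definition step (v w : nat -> R) (t : nat) (s : pstate) : pstate :=
  if switch v w s t then PState (jump (target s) t.+1) t.+1 else s.

(* [trace v w t]: the state of Player I before his move at time [t]. *)
Fixpoint trace (v w : nat -> R) (t : nat) : pstate :=
  if t is t'.+1 then step v w t' (trace v w t') else PState y0 0.

Lemma trace_ext (v w v' w' : nat -> R) (t : nat) :
  (forall i, (i < t)%N -> v i = v' i /\ w i = w' i) ->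
  trace v w t = trace v' w' t.
Proof.
elim: t => //= t IH vw; rewrite IH => [|i it]; last by apply: vw; exact: ltnW.
rewrite /step /switch; congr (if _ && _ then _ else _); apply: eq_in_has => i;
  rewrite mem_index_iota => /andP [_ it];
  by case: (vw i it) => vi wi; rewrite ?vi ?wi.
Qed.

Definition strategy (l : seq (R * R)) : A :=
  let hist i := nth (0, 0) l i in
  sval (target (trace (fun i => (hist i).1) (fun i => (hist i).2) (size l)))
       (size l).

Section Play.
Variables v w : nat -> R.
Local Notation S := (trace v w).
Local Notation play := (play_I strategy v w).

Lemma play_target (t : nat) : play t = sval (target (S t)) t.
Proof.
rewrite /play_I /strategy size_map size_iota; congr (sval (target _) t).
by apply: trace_ext => i it; rewrite (nth_map 0) ?size_iota // nth_iota.
Qed.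

Lemma target_C (t : nat) : C (target (S t)).
Proof.
elim: t => //= t IH; rewrite /step; case: ifP => _ //=.
by have [] := jump_spec _ t.+1 IH.
Qed.

Lemma switch_step (t : nat) :
  switch v w (S t) t -> S t.+1 = PState (jump (target (S t)) t.+1) t.+1.
Proof. by rewrite /= /step => ->. Qed.

Lemma trace_stable (a b : nat) : (a <= b)%N ->
  (forall u, (a <= u < b)%N -> ~~ switch v w (S u) u) -> S b = S a.
Proof.
elim: b => [|b IH]; first by rewrite leqn0 => /eqP ->.
rewrite leq_eqVlt ltnS => /orP [/eqP <- //|ab quiet].
rewrite /= /step (negbTE (quiet b _)); last by rewrite ab ltnSn.
by apply: IH => // u /andP [au ub]; apply: quiet; rewrite au ltnW.
Qed.

Lemma target_prefix (t t' i : nat) : (i <= t)%N -> (t <= t')%N ->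
  sval (target (S t')) i = sval (target (S t)) i.
Proof.
move=> it; elim: t' => [|t' IH]; first by rewrite leqn0 => /eqP ->.
rewrite leq_eqVlt => /orP [/eqP -> //|tt']; rewrite -IH // /= /step.
case: ifP => _ //=; have [_ agree _] := jump_spec _ t'.+1 (target_C t').
by apply: agree; rewrite ltnS (leq_trans it).
Qed.

Lemma play_prefix (t i : nat) : (i <= t)%N -> play i = sval (target (S t)) i.
Proof. by move=> it; rewrite play_target (@target_prefix i t i (leqnn i) it). Qed.

Lemma play_legal (t : nat) : T (mkseq play t.+1).
Proof.
have -> : mkseq play t.+1 = mkseq (sval (target (S t))) t.+1.
  apply/eq_in_map => i; rewrite mem_iota add0n ltnS => /andP [_].
  exact: play_prefix.
exact: (svalP (target (S t)) t.+1).
Qed.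

Lemma last_switch_le (t : nat) : (last_switch (S t) <= t)%N.
Proof.
elim: t => //= t IH; rewrite /step; case: ifP => _ //=; exact: leqW.
Qed.

Lemma last_switch_mono : {homo (fun t => last_switch (S t)) : i j / (i <= j)%N}.
Proof.
apply: homo_leq => [//|y x z|t]; first exact: leq_trans.
by rewrite /= /step; case: ifP => _ //=; exact: leqW (last_switch_le t).
Qed.

Lemma switch_witness (t : nat) : switch v w (S t) t ->
  (exists2 t1, (last_switch (S t) <= t1)%N & near (v t1) (target (S t))) /\
  (exists2 t2, (last_switch (S t) <= t2)%N & near (w t2) (target (S t))).
Proof.
by move=> /andP [/hasP [t1 + ?] /hasP [t2 + ?]];
  rewrite !mem_index_iota => /andP [? _] /andP [? _]; split;
  [exists t1 | exists t2].
Qed.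

(* If both sequences of Player II frequently come within [c] of [f x], where
   [x] is the play, Player I switches infinitely often: otherwise the target
   eventually stays equal to [x], and the next visits of [v] and [w] near
   [f x] force one more switch. *)
Lemma switch_often (x : Branches T) : sval x = play ->
  (forall N, exists2 t, (N <= t)%N & near (v t) x) ->
  (forall N, exists2 t, (N <= t)%N & near (w t) x) ->
  forall N, exists2 t, (N <= t)%N & switch v w (S t) t.
Proof.
move=> xplay vx wx N; apply: contrapT => never.
have quiet t : (N <= t)%N -> ~~ switch v w (S t) t.
  by move=> Nt; apply/negP => swt; apply: never; exists t.
have stable t : (N <= t)%N -> S t = S N.
  by move=> Nt; apply: trace_stable => // u /andP [Nu _]; exact: quiet.
have xN : x = target (S N).
  apply: branch_eq; rewrite xplay; apply: funext => i.
  by rewrite (@play_prefix (maxn i N)) ?leq_maxl // stable ?leq_maxr.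
have [t1 Nt1 vt1] := vx N; have [t2 Nt2 wt2] := wx N.
have Nm : (N <= maxn t1 t2)%N by rewrite (leq_trans Nt1) ?leq_maxl.
have lN t' : (N <= t')%N -> (last_switch (S N) <= t')%N.
  exact: leq_trans (last_switch_le N).
move/negP: (quiet _ Nm); apply; rewrite /switch stable // -xN.
by apply/andP; split; apply/hasP; [exists t1 | exists t2] => //;
  rewrite mem_index_iota ltnS ?leq_maxl ?leq_maxr lN.
Qed.

(* If eventually [v < L + c] and [L - c < w], then at every switch [b]
   after a late switch [a] the target is [2 c]-close to [L]: the witnesses
   of the switch at [b] come after [a]. *)
Lemma target_close (L : R) (N a b : nat) :
  (forall t, (N <= t)%N -> v t < L + c) ->
  (forall t, (N <= t)%N -> L - c < w t) ->
  (N <= a < b)%N -> switch v w (S a) a -> switch v w (S b) b ->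
  `|f (target (S b)) - L| < 2 * c.
Proof.
move=> vL wL /andP [Na ab] swa swb.
have late : (a < last_switch (S b))%N.
  by have := last_switch_mono a.+1 b ab; rewrite (switch_step a swa).
have [[t1 lt1 vt1] [t2 lt2 wt2]] := switch_witness b swb.
have Nt1 : (N <= t1)%N by rewrite (leq_trans Na) // ltnW // (leq_trans late).
have Nt2 : (N <= t2)%N by rewrite (leq_trans Na) // ltnW // (leq_trans late).
move: vt1 wt2 (vL t1 Nt1) (wL t2 Nt2); rewrite /near !ltr_norml.
by move=> /andP [? ?] /andP [? ?] ? ?; apply/andP; split; lra.
Qed.

(* Hence Player I cannot switch infinitely often when eventually
   [v < L + c] and [L - c < w]: the targets at two consecutive late
   switches would both be [2 c]-close to [L], yet [4 c]-apart. *)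
Lemma switch_rarely (L : R) :
  (exists N, forall t, (N <= t)%N -> v t < L + c) ->
  (exists N, forall t, (N <= t)%N -> L - c < w t) ->
  ~ (forall N, exists2 t, (N <= t)%N & switch v w (S t) t).
Proof.
move=> [Nv vL] [Nw wL] often; pose N := maxn Nv Nw.
have vN t : (N <= t)%N -> v t < L + c.
  by move=> Nt; apply: vL; exact: leq_trans (leq_maxl _ _) Nt.
have wN t : (N <= t)%N -> L - c < w t.
  by move=> Nt; apply: wL; exact: leq_trans (leq_maxr _ _) Nt.
have [s1 Ns1 sw1] := often N; have [s2 s12 sw2] := often s1.+1.
have next_switch : exists s, (s2 < s)%N && switch v w (S s) s.
  by have [s ? ?] := often s2.+1; exists s; apply/andP.
case: (ex_minnP next_switch) => s3 /andP [s23 sw3] first_s3.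
have jumped : S s3 = S s2.+1.
  apply: trace_stable => // u /andP [s2u us3]; apply/negP => swu.
  by have := first_s3 u; rewrite s2u swu leqNgt us3 => /(_ isT).
have [_ _ far] := jump_spec _ s2.+1 (target_C s2).
have close2 : `|f (target (S s2)) - L| < 2 * c.
  by apply: (target_close L N s1 s2 vN wN _ sw1 sw2); rewrite Ns1.
have close3 : `|f (target (S s3)) - L| < 2 * c.
  apply: (target_close L N s1 s3 vN wN _ sw1 sw3).
  by rewrite Ns1 (leq_trans s12 (ltnW s23)).
rewrite jumped (switch_step s2 sw2) /= in close3.
move: close2 close3 far; rewrite !ltr_norml ltr_normr.
move=> /andP [? ?] /andP [? ?] /orP [?|?];
  by (suff : c < c by rewrite ltxx); lra.
Qed.

End Play.
End SwitchingStrategy.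
Arguments strategy {R A T}.
Arguments play_legal {R A T f C c jump} jump_spec {y0} C_y0 {v w}.
Arguments switch_often {R A T f C c jump} jump_spec {y0} C_y0 {v w x}.
Arguments switch_rarely {R A T f C c jump} jump_spec {y0} C_y0 {v w L}.

Theorem mainTheorem17 (R : realType) (A : countType) (a0 : A)
  (T : set (seq A)) (HT : is_tree T) (HP : is_pruned T)
  (f : Branches T -> R) (C : set (Branches T))
  (HC : cyl_closed T C) (HCne : C !=set0)
  (Hosc : (0 < ereal_inf [set osc T f C x | x in C])%E) :
  I_wins_Gamma' T f.
Proof.
have [e e0 osc_ge] := ereal_inf_gt0_bound Hosc.
have [c c0 ce] : exists2 c : R, 0 < c & 8 * c < e by exists (e / 16); lra.
have [jump jump_spec] : exists jump : Branches T -> nat -> Branches T,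
    forall y n, C y -> [/\ C (jump y n), agree_upto n (jump y n) y
                         & 4 * c < `|f (jump y n) - f y|].
  apply: far_jump_exists => y Cy.
  by apply: lt_le_trans (osc_ge _ (ex_intro2 _ _ y Cy erefl)); rewrite lte_fin; lra.
have [y0 Cy0] := HCne.
exists (strategy f c jump y0) => v w; split => [t|x xplay [vx wx]].
  exact: (play_legal jump_spec Cy0 t).
have wx' : limn_esup (fun t => (- w t)%:E) = (- f x)%:E.
  by rewrite EFinN wx /limn_einf oppeK.
have often := switch_often jump_spec Cy0 xplay.
apply: (switch_rarely jump_spec Cy0 (L := f x) _ _ (often _ _)).
- exact: limn_esup_eventually_lt c0 (esym vx).
- have [N wN] := limn_esup_eventually_lt c0 wx'.
  by exists N => t /wN; lra.
- exact: limn_esup_frequently_near c0 (esym vx).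
- move=> N; have [t Nt wt] := limn_esup_frequently_near c0 wx' N.
  by exists t => //; move: wt; rewrite -opprD normrN.
Qed.
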